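(* Let $C$ be a sorting network on $n$ channels of depth $d$. Then there is a sorting network $N=L_1;\ldots;L_d$ on $n$ channels of the same depth $d$ whose last layer $L_d$ (i) only contains comparators between adjacent channels, i.e. of the form $(i,i+1)$, and (ii) does not contain two adjacent unused channels, i.e. there is no $i<n$ such that neither $i$ nor $i+1$ is used in $L_d$.
   Context: Channels are numbered $1,\ldots,n$. A comparator network of depth $d$ is a sequence $C=L_1;\ldots;L_d$ of layers; each layer is a set of comparators $(i,j)$ with $1\le i<j\le n$, each channel occurring in at most one comparator of a layer. An input $\bar x\in\{0,1\}^n$ propagates: $\bar x_0=\bar x$, and $\bar x_k$ is obtained from $\bar x_{k-1}$ by, for each $(i,j)\in L_k$, putting the minimum of the values at positions $i,j$ at position $i$ and the maximum at position $j$. The output is $C(\bar x)=\bar x_d$; $C$ is a sorting network if $C(\bar x)$ is sorted non-decreasingly for all $\bar x\in\{0,1\}^n$. A channel is used in a layer if it occurs in some comparator of that layer. *)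

From mathcomp Require Import all_boot.
Set Implicit Arguments. Unset Strict Implicit. Unset Printing Implicit Defensive.

(* Channels are 'I_n (channel k of the paper is the ordinal k-1).
   A comparator is a pair (i, j) of channels; a layer is a sequence of
   comparators; a comparator network is a sequence of layers. *)
Definition comparator n := ('I_n * 'I_n)%type.
Definition layer n := seq (comparator n).
Definition network n := seq (layer n).

Definition used n (L : layer n) (x : 'I_n) : bool :=
  has (fun c => (c.1 == x) || (c.2 == x)) L.

Definition wf_layer n (L : layer n) : bool :=
  all (fun c : comparator n => (c.1 < c.2)%N) L &&
  uniq (flatten [seq [:: c.1; c.2] | c : comparator n <- L]).

Definition wf_network n (C : network n) : bool := all (@wf_layer n) C.

Definition depth n (C : network n) : nat := size C.

(* apply one layer to a 0-1 input (for a well-formed layer the comparators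
   act on disjoint channels, so applying them in sequence is the same as
   applying them in parallel) *)
Definition apply_comparator n (c : comparator n) (x : {ffun 'I_n -> bool})
  : {ffun 'I_n -> bool} :=
  [ffun k => if k == c.1 then x c.1 && x c.2
             else if k == c.2 then x c.1 || x c.2
             else x k].

Definition apply_layer n (L : layer n) (x : {ffun 'I_n -> bool}) :=
  foldl (fun y c => apply_comparator c y) x L.

Definition run n (C : network n) (x : {ffun 'I_n -> bool}) :=
  foldl (fun y L => apply_layer L y) x C.

Definition sorted01 n (x : {ffun 'I_n -> bool}) : bool :=
  [forall i : 'I_n, forall j : 'I_n, ((i <= j)%N) ==> (x i <= x j)].

Definition sorting_network n (C : network n) : Prop :=
  wf_network C /\ forall x : {ffun 'I_n -> bool}, sorted01 (run C x).

From mathcomp Require Import all_boot zify.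
Set Implicit Arguments. Unset Strict Implicit. Unset Printing Implicit Defensive.

(* Let C;L be a sorting network.  A comparator (i,j) of L with j >= i+2 never
   swaps.  If it swapped on a 0-1 input x with c ones, then, since C;L sorts and
   preserves the number of ones, i < n - c <= j.  As C is monotone, swapping
   persists when a one is added to x (while i < n - c - 1) or removed from x
   (while n - c + 1 <= j); thanks to j >= i+2 one of the two is always possible,
   so swapping persists under exchanging a 0 and a 1 of x, hence also on the
   sorted input with c ones, which C leaves unchanged: absurd.  Dropping these
   comparators and then greedily adding comparators (i,i+1) between unused
   channels, which never swap on the sorted output, gives the last layer. *)

Notation vec n := {ffun 'I_n -> bool}.

Definition ones n (x : vec n) : nat := #|[set k | x k]|.

Definition sorted_vec n (c : nat) : vec n := [ffun k : 'I_n => n - c <= k].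

Definition upd n (x : vec n) (r : 'I_n) (b : bool) : vec n :=
  [ffun k => if k == r then b else x k].

Lemma card_ord_geq n m : #|[set k : 'I_n | m <= k]| = n - m.
Proof.
rewrite -sum1_card -[n - m]muln1 -sum_nat_const_nat big_geq_mkord.
by apply: eq_bigl => k; rewrite inE.
Qed.

Lemma ones_le n (x : vec n) : ones x <= n.
Proof. by rewrite /ones -[n in _ <= n]card_ord max_card. Qed.

Lemma ones_sorted_vec n c : c <= n -> ones (sorted_vec n c) = c.
Proof.
move=> cn; rewrite /ones -[RHS](subKn cn) -card_ord_geq.
by apply: eq_card => k; rewrite !inE ffunE.
Qed.

Lemma ones_upd_true n (x : vec n) r : x r = false -> ones (upd x r true) = (ones x).+1.
Proof.
move=> xr; rewrite /ones.
have -> : [set k | upd x r true k] = r |: [set k | x k].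
  by apply/setP=> k; rewrite !inE ffunE; case: eqP.
by rewrite cardsU1 inE xr.
Qed.

Lemma upd_id n (x : vec n) r : upd x r (x r) = x.
Proof. by apply/ffunP=> k; rewrite ffunE; case: eqP => // ->. Qed.

Lemma upd_upd n (x : vec n) r b b' : upd (upd x r b) r b' = upd x r b'.
Proof. by apply/ffunP=> k; rewrite !ffunE; case: eqP. Qed.

Lemma updC n (x : vec n) r s b b' : r != s ->
  upd (upd x r b) s b' = upd (upd x s b') r b.
Proof.
move=> rs; apply/ffunP=> k; rewrite !ffunE.
by case: (eqVneq k r) => [->|//]; rewrite (negbTE rs).
Qed.

Lemma ones_upd_false n (x : vec n) r : x r -> ones x = (ones (upd x r false)).+1.
Proof.
move=> xr; rewrite -(ones_upd_true (r := r)) ?ffunE ?eqxx //.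
by rewrite upd_upd -[true]xr upd_id.
Qed.

Lemma sorted01P n (x : vec n) :
  reflect (forall i j : 'I_n, i <= j -> x i <= x j) (sorted01 x).
Proof.
apply: (iffP forallP) => [h i j ij | h i]; last by apply/forallP => j; apply/implyP/h.
by have /forallP/(_ j)/implyP := h i; apply.
Qed.

Lemma sorted_vec_sorted n c : sorted01 (sorted_vec n c).
Proof.
apply/sorted01P=> i j ij; rewrite !ffunE.
by case: (leqP (n - c) i) => // h; rewrite (leq_trans h ij).
Qed.

Lemma sorted01E n (x : vec n) : sorted01 x -> x = sorted_vec n (ones x).
Proof.
move/sorted01P=> x_sorted; apply/ffunP=> k; rewrite ffunE.
have kn := ltn_ord k.
case xk: (x k).
  have : [set k' : 'I_n | k <= k'] \subset [set t | x t].
    by apply/subsetP=> t; rewrite !inE => /x_sorted; rewrite xk; case: (x t).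
  by move/subset_leq_card; rewrite card_ord_geq -/(ones x) => h; apply/esym; lia.
have : [set t | x t] \subset [set k' : 'I_n | k.+1 <= k'].
  apply/subsetP=> t; rewrite !inE ltnNge; apply: contraTN => /x_sorted.
  by rewrite xk; case: (x t).
by move/subset_leq_card; rewrite card_ord_geq -/(ones x) => h; apply/esym/negbTE; lia.
Qed.

Lemma ones_swap n (x : vec n) p q : x p -> x q = false ->
  ones (upd (upd x p false) q true) = ones x.
Proof.
move=> xp xq; have pq : q != p by apply: contraFneq xq => ->.
by rewrite ones_upd_true ?(ones_upd_false xp) // ffunE (negbTE pq).
Qed.

Lemma exchange_ones n (x y : vec n) p : ones y = ones x -> x p -> y p = false ->
  exists2 q, x q = false & y q.
Proof.
move=> eq_ones xp yp.
have [q /andP[/negbTE xq yq]|none] := pickP [pred q | ~~ x q && y q]; first by exists q.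
suff : ones y < ones x by rewrite eq_ones ltnn.
apply/proper_card/properP; split; last by exists p; rewrite inE ?xp ?yp.
by apply/subsetP=> t; rewrite !inE => yt; move: (none t); rewrite /= yt andbT => /negbFE.
Qed.

Definition le01 n (x y : vec n) := forall k, x k <= y k.

Lemma apply_comparator_id n (c : comparator n) (x : vec n) :
  x c.1 <= x c.2 -> apply_comparator c x = x.
Proof.
case: c => a b /= h; apply/ffunP=> k; rewrite ffunE.
by case: eqP => [->|_]; [|case: eqP => [->|_] //]; move: h; case: (x a); case: (x b).
Qed.

Lemma apply_comparator_fire n (c : comparator n) (x : vec n) : c.1 != c.2 ->
  x c.1 -> x c.2 = false -> apply_comparator c x = upd (upd x c.1 false) c.2 true.
Proof.
case: c => a b /= ab xa xb; apply/ffunP=> k; rewrite !ffunE.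
by case: (eqVneq k a) => [->|_]; rewrite ?(negbTE ab) ?xa ?xb //; case: eqP.
Qed.

Lemma ones_apply_comparator n (c : comparator n) (x : vec n) : c.1 != c.2 ->
  ones (apply_comparator c x) = ones x.
Proof.
move=> c12; case: (leqP (x c.1) (x c.2)) => [/apply_comparator_id -> //|].
case x1: (x c.1); case x2: (x c.2) => // _.
by rewrite apply_comparator_fire ?ones_swap.
Qed.

Lemma apply_comparator_mono n (c : comparator n) :
  {homo apply_comparator c : x y / le01 x y}.
Proof.
move=> x y le_xy k; rewrite !ffunE; have := le_xy c.1; have := le_xy c.2.
by case: ifP => _; [|case: ifP => _]; case: (x c.1); case: (x c.2);
  case: (y c.1); case: (y c.2) => //; apply: le_xy.
Qed.

Section Fold.
Variables (n : nat) (T : eqType) (g : T -> vec n -> vec n).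

Lemma foldl_ones s x : {in s, forall t y, ones (g t y) = ones y} ->
  ones (foldl (fun y t => g t y) x s) = ones x.
Proof.
elim: s x => //= t s IH x gs; rewrite IH ?gs ?mem_head // => u us.
by apply: gs; rewrite inE us orbT.
Qed.

Lemma foldl_mono s : (forall t, {homo g t : x y / le01 x y}) ->
  {homo (fun x => foldl (fun y t => g t y) x s) : x y / le01 x y}.
Proof. by move=> g_mono; elim: s => //= t s IH x y /g_mono/IH. Qed.

Lemma foldl_fix s x : {in s, forall t, g t x = x} -> foldl (fun y t => g t y) x s = x.
Proof.
elim: s => //= t s IH gs; rewrite gs ?mem_head // IH // => u us.
by apply: gs; rewrite inE us orbT.
Qed.

End Fold.

Lemma ones_apply_layer n (L : layer n) x : wf_layer L -> ones (apply_layer L x) = ones x.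
Proof.
case/andP=> /allP lt12 _; apply: foldl_ones => c /lt12 c12 y.
by apply: ones_apply_comparator; rewrite neq_ltn c12.
Qed.

Lemma ones_run n (C : network n) x : wf_network C -> ones (run C x) = ones x.
Proof. by move/allP=> wfC; apply: foldl_ones => L /wfC wfL y; apply: ones_apply_layer. Qed.

Lemma run_mono n (C : network n) : {homo run C : x y / le01 x y}.
Proof.
by apply: foldl_mono => L; apply: foldl_mono => c; apply: apply_comparator_mono.
Qed.

Lemma run_sorted n (C : network n) (x : vec n) : wf_network C -> sorted01 x -> run C x = x.
Proof.
move=> /allP wfC /sorted01P x_sorted; apply: foldl_fix => L /wfC /andP[/allP lt12 _].
by apply: foldl_fix => c /lt12 c12; apply/apply_comparator_id/x_sorted/ltnW.
Qed.

Definition chans n (L : layer n) : seq 'I_n := flatten [seq [:: c.1; c.2] | c <- L].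

Lemma chans_cons n (c : comparator n) L : chans (c :: L) = c.1 :: c.2 :: chans L.
Proof. by []. Qed.

Lemma used_chans n (L : layer n) x : used L x = (x \in chans L).
Proof.
elim: L => //= c L IH; rewrite chans_cons !inE IH orbA.
by rewrite ![x == _]eq_sym.
Qed.

Lemma mem_chans n (L : layer n) c : c \in L -> (c.1 \in chans L) && (c.2 \in chans L).
Proof.
by move=> cL; apply/andP; split; apply/flatten_mapP; exists c; rewrite // !inE eqxx ?orbT.
Qed.

Lemma apply_comparator_notin n (c : comparator n) (u : vec n) k :
  k != c.1 -> k != c.2 -> apply_comparator c u k = u k.
Proof. by move=> k1 k2; rewrite ffunE (negbTE k1) (negbTE k2). Qed.

Lemma apply_layer_notin n (L : layer n) (u : vec n) k :
  k \notin chans L -> apply_layer L u k = u k.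
Proof.
elim: L u => //= c L IH u; rewrite chans_cons !inE !negb_or => /and3P[k1 k2 kL].
by rewrite IH // apply_comparator_notin.
Qed.

Lemma apply_layer_at n (L : layer n) (i j : 'I_n) (u : vec n) :
  wf_layer L -> (i, j) \in L ->
  apply_layer L u i = u i && u j /\ apply_layer L u j = u i || u j.
Proof.
case/andP=> _ + ijL; case/splitPr: ijL => La Lb.
rewrite -/(chans _) /chans map_cat flatten_cat -!/(chans _) chans_cons cat_uniq /=.
rewrite !inE !negb_or => /and5P[_ /and3P[iLa jLa _] /andP[ij iLb] jLb _].
rewrite /apply_layer foldl_cat /= -!/(apply_layer _ _) !apply_layer_notin //.
by rewrite !ffunE /= eqxx !apply_layer_notin // eq_sym (negbTE ij) eqxx.
Qed.

Section RedundantComparator.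
Variables (n : nat) (C : network n) (L : layer n) (i j : 'I_n).
Hypotheses (wfC : wf_network C) (wfL : wf_layer L) (ijL : (i, j) \in L)
  (sorts : forall x, sorted01 (apply_layer L (run C x))).

Let fires x := run C x i && ~~ run C x j.

Lemma apply_last_layer x : apply_layer L (run C x) = sorted_vec n (ones x).
Proof. by rewrite [LHS]sorted01E // ones_apply_layer // ones_run. Qed.

Lemma fires_band x : fires x -> i < n - ones x <= j.
Proof.
case/andP=> xi /negbTE xj; have [] := apply_layer_at (run C x) wfL ijL.
by rewrite apply_last_layer !ffunE xi xj /= ltnNge => -> ->.
Qed.

Lemma fires_upd_true x p : fires x -> x p = false -> i < n - (ones x).+1 ->
  fires (upd x p true).
Proof.
move=> /andP[xi _] xp gap; set y := upd x p true.
have yi : run C y i.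
  have le_xy : le01 x y by move=> k; rewrite ffunE; case: eqP => // ->; rewrite xp.
  by have := run_mono C le_xy i; rewrite xi; case: (run C y i).
have [+ _] := apply_layer_at (run C y) wfL ijL.
by rewrite apply_last_layer ones_upd_true // ffunE leqNgt gap /fires yi /= => <-.
Qed.

Lemma fires_upd_false x p : fires x -> x p -> n - (ones x).-1 <= j ->
  fires (upd x p false).
Proof.
move=> /andP[_ /negbTE xj] xp gap; set y := upd x p false.
have yj : run C y j = false.
  have le_yx : le01 y x by move=> k; rewrite ffunE; case: eqP => // ->; rewrite xp.
  by have := run_mono C le_yx j; rewrite xj; case: (run C y j).
have [_] := apply_layer_at (run C y) wfL ijL; rewrite apply_last_layer.
have -> : ones y = (ones x).-1 by rewrite (ones_upd_false xp).
by rewrite /fires ffunE gap yj orbF andbT => <-.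
Qed.

Hypothesis gap : i.+2 <= j.

Lemma fires_swap x p q : fires x -> x p -> x q = false ->
  fires (upd (upd x p false) q true).
Proof.
move=> fx xp xq; have pq : p != q by apply: contraTneq xp => ->; rewrite xq.
have /andP[lo hi] := fires_band fx.
have ones_pos : 0 < ones x by rewrite (ones_upd_false xp).
case: (ltnP i (n - (ones x).+1)) => [up|low].
  rewrite updC //; apply: fires_upd_false; rewrite ?ones_upd_true //.
  - exact: fires_upd_true.
  - by rewrite ffunE (negbTE pq).
apply: fires_upd_true; first (apply: fires_upd_false => //; lia).
  by rewrite ffunE eq_sym (negbTE pq).
by rewrite -(ones_upd_false xp); lia.
Qed.

Lemma fires_same_ones x y : fires x -> ones y = ones x -> fires y.
Proof.
move Ek: #|[set t | x t && ~~ y t]| => k; elim: k x Ek => [|k IH] x Ek fx eq_ones.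
  have no_diff t : x t -> y t.
    move=> xt; apply/negPn/negP => yt; suff : t \in set0 by rewrite inE.
    by rewrite -(cards0_eq Ek) inE xt yt.
  suff -> : y = x by [].
  apply/ffunP=> t; case xt: (x t); first exact: no_diff.
  apply/negbTE/negP=> yt; have [q yq xq] := exchange_ones (esym eq_ones) yt xt.
  by move/no_diff: xq; rewrite yq.
have : 0 < #|[set t | x t && ~~ y t]| by rewrite Ek.
case/card_gt0P=> p; rewrite inE => /andP[xp /negbTE yp].
have [q xq yq] := exchange_ones eq_ones xp yp.
apply: (IH (upd (upd x p false) q true)); rewrite ?fires_swap ?ones_swap //.
have -> : [set t | upd (upd x p false) q true t && ~~ y t] = [set t | x t && ~~ y t] :\ p.
  apply/setP=> t; rewrite !inE !ffunE.
  by case: (eqVneq t q) => [->|_]; [rewrite xq yq /= andbF | case: (eqVneq t p)].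
by move: Ek; rewrite (cardsD1 p) inE xp yp => -[].
Qed.

Lemma fires_never x : ~~ fires x.
Proof.
apply/negP=> /fires_same_ones/(_ (ones_sorted_vec (ones_le x))).
rewrite /fires run_sorted ?sorted_vec_sorted // !ffunE => /andP[lo /negP]; apply.
exact: leq_trans lo (ltnW (ltnW gap)).
Qed.

End RedundantComparator.

Lemma redundant_comparator n (C : network n) (L : layer n) (i j : 'I_n) :
  wf_network C -> wf_layer L -> (forall x, sorted01 (apply_layer L (run C x))) ->
  (i, j) \in L -> i.+2 <= j -> forall x, run C x i <= run C x j.
Proof.
move=> wfC wfL sorts ijL gap x; have := fires_never wfC wfL ijL sorts gap x.
by case: (run C x i); case: (run C x j).
Qed.

Lemma apply_layer_filter n (P : pred (comparator n)) (L : layer n) (u : vec n) :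
  uniq (chans L) -> {in L, forall c, ~~ P c -> u c.1 <= u c.2} ->
  apply_layer (filter P L) u = apply_layer L u.
Proof.
elim: L u => // c L IH u; rewrite chans_cons /= !inE negb_or.
case/andP=> /andP[c12 c1L] /andP[c2L uL] noP.
have noPL : {in L, forall c, ~~ P c -> u c.1 <= u c.2}.
  by move=> c' c'L; apply: noP; rewrite inE c'L orbT.
case: ifP => Pc; last by rewrite apply_comparator_id ?IH // noP ?mem_head ?Pc.
rewrite /apply_layer /= -!/(apply_layer _ _); apply: IH => // c' c'L nPc'.
have untouched k : k \in chans L -> apply_comparator c u k = u k.
  by move=> kL; apply: apply_comparator_notin; [move: c1L | move: c2L]; apply: contraNneq => <-.
by case/andP: (mem_chans c'L) => /untouched -> /untouched ->; apply: noPL.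
Qed.

Lemma chans_filter n (P : pred (comparator n)) (L : layer n) :
  subseq (chans (filter P L)) (chans L).
Proof.
elim: L => // c L IH; rewrite chans_cons [filter _ _]/=; case: (P c).
  by rewrite chans_cons /= !eqxx.
by apply: (subseq_trans IH); apply: (subseq_trans (subseq_cons _ c.2)); apply: subseq_cons.
Qed.

Lemma wf_layer_filter n (P : pred (comparator n)) (L : layer n) :
  wf_layer L -> wf_layer (filter P L).
Proof.
case/andP=> lt12 uL; apply/andP; split; last exact: subseq_uniq (chans_filter P L) uL.
by apply/allP=> c; rewrite mem_filter => /andP[_ /(allP lt12)].
Qed.

Definition add_if_free n (L : layer n) (c : comparator n) : layer n :=
  if ~~ used L c.1 && ~~ used L c.2 then rcons L c else L.

Lemma used_rcons n (L : layer n) c x :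
  used (rcons L c) x = used L x || (c.1 == x) || (c.2 == x).
Proof. by rewrite /used -cats1 has_cat /= orbF orbA. Qed.

Lemma used_add_if_free n (L : layer n) c x : used L x -> used (add_if_free L c) x.
Proof. by rewrite /add_if_free; case: ifP => // _ Lx; rewrite used_rcons Lx. Qed.

Lemma used_foldl_add_if_free n (L : layer n) s x :
  used L x -> used (foldl (@add_if_free n) L s) x.
Proof. by elim: s L => //= c s IH L /(used_add_if_free c)/IH. Qed.

Lemma foldl_add_if_free_covers n (L : layer n) s c : c \in s ->
  used (foldl (@add_if_free n) L s) c.1 || used (foldl (@add_if_free n) L s) c.2.
Proof.
elim: s L => //= c' s IH L; rewrite inE => /orP[/eqP <-|]; last exact: IH.
suff /orP[] : used (add_if_free L c) c.1 || used (add_if_free L c) c.2.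
  1,2: by move/(used_foldl_add_if_free s) ->; rewrite ?orbT.
rewrite /add_if_free; case: ifP => [_|]; last by case: (used L c.1); case: (used L c.2).
by rewrite used_rcons eqxx orbT.
Qed.

Lemma mem_foldl_add_if_free n (L : layer n) s c :
  c \in foldl (@add_if_free n) L s -> (c \in L) || (c \in s).
Proof.
elim: s L => [|c' s IH] L /=; first by move->.
move/IH; rewrite inE /add_if_free; case: ifP => _; last by case/orP => ->; rewrite ?orbT.
by rewrite mem_rcons inE; case/orP => [/orP[->|->]|->]; rewrite ?orbT.
Qed.

Lemma wf_add_if_free n (L : layer n) (c : comparator n) :
  c.1 < c.2 -> wf_layer L -> wf_layer (add_if_free L c).
Proof.
rewrite /add_if_free; case: ifP => // /andP[free1 free2] c12 /andP[lt12 uL].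
rewrite /wf_layer all_rcons c12 lt12 -cats1 -/(chans _) /chans map_cat flatten_cat /=.
rewrite -/(chans L) cat_uniq uL /= !inE -!used_chans (negbTE free1) (negbTE free2) !orbF.
by rewrite andbT neq_ltn c12.
Qed.

Lemma apply_add_if_free n (L : layer n) (c : comparator n) (u : vec n) : c.1 <= c.2 ->
  sorted01 (apply_layer L u) -> apply_layer (add_if_free L c) u = apply_layer L u.
Proof.
move=> c12 /sorted01P sorted_out; rewrite /add_if_free; case: ifP => // _.
by rewrite /apply_layer foldl_rcons apply_comparator_id //; apply: sorted_out.
Qed.

Lemma wf_foldl_add_if_free n (L : layer n) s : all (fun c : comparator n => c.1 < c.2) s ->
  wf_layer L -> wf_layer (foldl (@add_if_free n) L s).
Proof.
by elim: s L => //= c s IH L /andP[c12 s12] wfL; apply/IH/wf_add_if_free.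
Qed.

Lemma apply_foldl_add_if_free n (L : layer n) s (u : vec n) :
  all (fun c : comparator n => c.1 <= c.2) s -> sorted01 (apply_layer L u) ->
  apply_layer (foldl (@add_if_free n) L s) u = apply_layer L u.
Proof.
elim: s L => //= c s IH L /andP[c12 s12] sorted_out.
have same_out := apply_add_if_free c12 sorted_out.
by rewrite IH // same_out.
Qed.

Definition adjacent n (c : comparator n) : bool := val c.2 == (val c.1).+1.

Definition adjacent_pairs n : seq (comparator n) := enum [pred c : 'I_n * 'I_n | adjacent c].

Lemma normalize_last_layer n (C : network n) (L : layer n) :
  wf_network C -> wf_layer L -> (forall x, sorted01 (apply_layer L (run C x))) ->
  exists2 L' : layer n,
    wf_layer L' /\ forall x, apply_layer L' (run C x) = apply_layer L (run C x) &
    {in L', forall c, adjacent c} /\ forall c, adjacent c -> used L' c.1 || used L' c.2.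
Proof.
move=> wfC wfL sorts.
have adj_lt c : adjacent c -> c.1 < c.2 by move/eqP->.
have pairs_lt : all (fun c : comparator n => c.1 < c.2) (adjacent_pairs n).
  by apply/allP=> c; rewrite mem_enum; apply: adj_lt.
have filter_out x : apply_layer (filter (@adjacent n) L) (run C x) = apply_layer L (run C x).
  apply: apply_layer_filter => [|[i j] ijL nadj]; first by case/andP: wfL.
  apply: redundant_comparator (ijL) _ x => //.
  by have := allP (proj1 (andP wfL)) _ ijL; move: nadj; rewrite /adjacent /=; lia.
exists (foldl (@add_if_free n) (filter (@adjacent n) L) (adjacent_pairs n)); split.
- by apply: wf_foldl_add_if_free => //; apply: wf_layer_filter.
- move=> x; rewrite apply_foldl_add_if_free ?filter_out //.
  by apply: sub_all pairs_lt => c /ltnW.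
- by move=> c /mem_foldl_add_if_free; rewrite mem_filter mem_enum => /orP[/andP[]|].
- by move=> c adj; apply: foldl_add_if_free_covers; rewrite mem_enum.
Qed.

Lemma indicator_unsorted n (i j : 'I_n) : i < j -> ~~ sorted01 [ffun k => k == i].
Proof.
move=> ij; apply/sorted01P=> /(_ i j (ltnW ij)); rewrite !ffunE eqxx.
by case: eqVneq ij => [->|]; rewrite ?ltnn.
Qed.

Lemma run_rcons n (C : network n) L (x : vec n) : run (rcons C L) x = apply_layer L (run C x).
Proof. by rewrite /run foldl_rcons. Qed.

Theorem lemma6 (n d : nat) (C : network n) :
  sorting_network C -> depth C = d ->
  exists N : network n,
    [/\ sorting_network N, depth N = d &
        forall Ld : layer n, last [::] N = Ld ->
        (forall c, c \in Ld -> c.2 = c.1.+1 :> nat) /\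
        ~ (exists i j : 'I_n, j = i.+1 :> nat /\ ~~ used Ld i /\ ~~ used Ld j)].
Proof.
move=> [wfC sorts] <-; case/lastP: C wfC sorts => [|C L] wfC sorts.
  exists [::]; split => // _ <-; split => // -[i [j [ji _]]].
  by apply/negP: (sorts [ffun k => k == i]); apply: (indicator_unsorted (j := j)); rewrite ji.
move: wfC; rewrite /wf_network all_rcons => /andP[wfL wfC].
have sorts_last x : sorted01 (apply_layer L (run C x)) by rewrite -run_rcons.
have [L' [wfL' same_out] [adjL' satL']] := normalize_last_layer wfC wfL sorts_last.
exists (rcons C L'); split.
- split; first by rewrite /wf_network all_rcons wfL'.
  by move=> x; rewrite run_rcons same_out -run_rcons.
- by rewrite /depth !size_rcons.
- move=> Ld; rewrite last_rcons => <-; split; first by move=> c /adjL' /eqP.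
  case=> i [j [ji [/negbTE ui /negbTE uj]]].
  by have := satL' (i, j); rewrite /adjacent /= ui uj ji eqxx => /(_ isT).
Qed.
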